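(* Let $\hat q,\hat p$ be $n\times n$ parametric matrices and $M$ an $n\times n$ $(\hat q,\hat p)$-Manin matrix over $\mathfrak R$ which is invertible and such that $\mathrm{cdet}_{\hat q}(M)$ is invertible in $\mathfrak R$. Then for all $1\le i,j\le n$, $$(M^{-1})_{ij}=\varepsilon(\hat p,i^c\oplus i)^{-1}\,\varepsilon(\hat q,j^c\oplus j)\,\mathrm{cdet}_{\hat q}(M)^{-1}\,\mathrm{cdet}_{\hat q}(M_{j^c i^c}),$$ where for $a\in\{1,\dots,n\}$, $a^c$ denotes the increasing multi-index $(1,\dots,\hat a,\dots,n)$ obtained by deleting $a$, and $a^c\oplus a=(1,\dots,\hat a,\dots,n,a)$.
   Context: $\mathfrak R$ is an associative unital algebra over $\mathbb C$. A parametric $n\times n$ matrix is a matrix $\hat q=(q_{ij})$ of nonzero complex numbers with $q_{ij}q_{ji}=1$, $q_{ii}=1$. An $n\times n$ matrix $M$ over $\mathfrak R$ is a $(\hat q,\hat p)$-Manin matrix if $M_{ik}M_{jk}=q_{ji}M_{jk}M_{ik}$ for $i<j$ and all $k$, and $M_{ik}M_{jl}-q_{ji}p_{kl}M_{jl}M_{ik}+p_{kl}M_{il}M_{jk}-q_{ji}M_{jk}M_{il}=0$ for $i<j$, $k<l$. For a multi-index $I=(i_1,\dots,i_r)$, $\varepsilon(\hat q,I)=0$ if two entries coincide, otherwise $\varepsilon(\hat q,I)=\prod_{s<t,\ i_s>i_t}(-q_{i_si_t})$. For increasing $I=(i_1<\dots<i_r)$ and $\sigma\in S_r$, $\varepsilon(\hat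 q,I,\sigma)=\prod_{s<t,\ \sigma(s)>\sigma(t)}(-q_{i_{\sigma(s)}i_{\sigma(t)}})$. For increasing $I$ and any multi-index $J=(j_1,\dots,j_r)$, $\mathrm{cdet}_{\hat q}(M_{IJ})=\sum_{\sigma\in S_r}\varepsilon(\hat q,I,\sigma)M_{i_{\sigma(1)},j_1}\cdots M_{i_{\sigma(r)},j_r}$; $\mathrm{cdet}_{\hat q}(M)$ is the case $I=J=(1,\dots,n)$. *)

From HB Require Import structures.
From mathcomp Require Import all_boot all_order all_algebra all_fingroup.
From mathcomp.real_closed Require Import complex.
From mathcomp Require Import Rstruct.
Set Implicit Arguments. Unset Strict Implicit. Unset Printing Implicit Defensive.
Import Order.TTheory GRing.Theory Num.Theory.
Local Open Scope ring_scope.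

Definition C : fieldType := complex Rdefinitions.R.

Definition parametric (n : nat) (q : 'M[C]_n) : Prop :=
  (forall i j, q i j != 0) /\ (forall i j, q i j * q j i = 1) /\ (forall i, q i i = 1).

Definition manin (A : algType C) (n : nat) (q p : 'M[C]_n) (M : 'M[A]_n) : Prop :=
  (forall (i j k : 'I_n), (i < j)%N ->
      M i k * M j k = q j i *: (M j k * M i k)) /\
  (forall (i j k l : 'I_n), (i < j)%N -> (k < l)%N ->
      M i k * M j l - (q j i * p k l) *: (M j l * M i k)
      + p k l *: (M i l * M j k) - q j i *: (M j k * M i l) = 0).

Definition eps (n : nat) (q : 'M[C]_n) (s : seq 'I_n) : C :=
  if uniq s then
    \prod_(x : 'I_(size s))
      \prod_(y : 'I_(size s) | (x < y)%N && (tnth (in_tuple s) y < tnth (in_tuple s) x)%N)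
        (- q (tnth (in_tuple s) x) (tnth (in_tuple s) y))
  else 0.

Definition eps_perm (n r : nat) (q : 'M[C]_n) (I : r.-tuple 'I_n) (s : 'S_r) : C :=
  \prod_(x : 'I_r) \prod_(y : 'I_r | (x < y)%N && (s y < s x)%N)
     (- q (tnth I (s x)) (tnth I (s y))).

(* cdet_q(M_{IJ}); the product over k is the ordered product (left to right). *)
Definition cdet (A : algType C) (n r : nat) (q : 'M[C]_n) (M : 'M[A]_n)
    (I J : r.-tuple 'I_n) : A :=
  \sum_(s : 'S_r) eps_perm q I s *: \prod_(k < r) M (tnth I (s k)) (tnth J k).

Definition cdet_full (A : algType C) (n : nat) (q : 'M[C]_n) (M : 'M[A]_n) : A :=
  cdet q M (ord_tuple n) (ord_tuple n).

Definition compl_seq (n : nat) (a : 'I_n) : seq 'I_n := [seq k <- enum 'I_n | k != a].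

Lemma compl_seq_size (n : nat) (a : 'I_n) : size (compl_seq a) == n.-1.
Proof.
rewrite /compl_seq size_filter.
have -> : n.-1 = #|[pred k : 'I_n | k != a]| by rewrite cardC1 card_ord.
rewrite cardE /enum_mem size_filter /=.
by rewrite filter_predT.
Qed.

Definition compl (n : nat) (a : 'I_n) : (n.-1).-tuple 'I_n := Tuple (compl_seq_size a).

Definition compl_plus (n : nat) (a : 'I_n) : seq 'I_n := rcons (compl_seq a) a.

From HB Require Import structures.
From mathcomp Require Import all_boot all_order all_algebra all_fingroup.
From mathcomp.real_closed Require Import complex.
From mathcomp Require Import Rstruct.
From mathcomp Require Import ring zify.
Import GRing.Theory.
Local Open Scope ring_scope.

(* Expanding a column determinant along its last column gives, for all indices a and b,
     sum_k eps(q, k^c+k) cdet_q(M_{k^c a^c}) M_{kb} = cdet_q(M_{(1..n),(a^c+b)}),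
   the column determinant of M with all rows and the column multi-index a^c+b.
   For a (q,p)-Manin matrix, pairing each permutation of the rows with its composite with the
   transposition of two adjacent positions turns the Manin relations into
   cdet_q(M_{(1..n),J'}) = -p_lk cdet_q(M_{(1..n),J}) when J' is J with the adjacent columns
   k, l swapped, and into cdet_q(M_{(1..n),J}) = 0 when these columns coincide. Bubble sorting J
   then gives cdet_q(M_{(1..n),J}) = eps(p, J) cdet_q(M). Since eps(p, a^c+b) vanishes unless
   b = a, the matrix adj = (eps(p, i^c+i)^-1 eps(q, j^c+j) cdet_q(M_{j^c i^c}))_ij satisfies
   adj M = cdet_q(M), so that M^-1 = cdet_q(M)^-1 adj. *)

Lemma sorted_or_adjacent {T : Type} (r : rel T) (s : seq T) :
  sorted r s \/ exists a x y b, s = a ++ x :: y :: b /\ ~~ r x y.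
Proof.
elim: s => [|x s IH]; first by left.
case: s IH => [|y s] IH; first by left.
have [rxy|nrxy] := boolP (r x y); last by right; exists [::], x, y, s.
case: IH => [sorted_ys|[a [z [w [b [-> nrzw]]]]]]; first by left; rewrite /= rxy.
by right; exists (x :: a), z, w, b.
Qed.

Lemma split_adjacent_at {T : Type} (s : seq T) t : (t.+1 < size s)%N ->
  exists a x y b, s = a ++ x :: y :: b /\ size a = t.
Proof.
move=> lt_t; have := size_drop t s.
case E: (drop t s) => [|x [|y b]] /= size_d; [lia | lia |].
by exists (take t s), x, y, b; rewrite -E cat_take_drop size_takel //; lia.
Qed.

Lemma perm_swap_adjacent {T : eqType} (a b : seq T) x y :
  perm_eq (a ++ x :: y :: b) (a ++ y :: x :: b).
Proof. by rewrite perm_cat2l (perm_catCA [:: x] [:: y]). Qed.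

Lemma uniq_perm_subset {T : eqType} (s1 s2 : seq T) :
  uniq s1 -> uniq s2 -> {subset s1 <= s2} -> (size s2 <= size s1)%N -> perm_eq s1 s2.
Proof.
move=> uniq_s1 uniq_s2 sub_s12 le_s21; apply: uniq_perm => //.
by have [] := uniq_min_size uniq_s1 sub_s12 le_s21.
Qed.

Lemma sorted_enum_ord n : sorted (fun x y : 'I_n => (x < y)%N) (enum 'I_n).
Proof. by have := iota_ltn_sorted 0 n; rewrite -val_enum_ord sorted_map. Qed.

Lemma sorted_uniq_enum_ord {n} {s : seq 'I_n} : size s = n -> uniq s ->
  sorted (fun x y : 'I_n => (x <= y)%N) s -> s = enum 'I_n.
Proof.
move=> size_s uniq_s sorted_s.
apply: (@sorted_eq _ (fun x y : 'I_n => (x <= y)%N) (fun y x z => @leq_trans y x z)).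
- by move=> x y /anti_leq/val_inj.
- exact: sorted_s.
- by apply: sub_sorted (sorted_enum_ord n) => x y /ltnW.
apply: uniq_perm_subset; rewrite ?enum_uniq ?size_enum_ord ?size_s // => x _.
exact: mem_enum.
Qed.

Lemma sorted_not_uniq_repeat {n} {s : seq 'I_n} :
  sorted (fun x y : 'I_n => (x <= y)%N) s -> ~~ uniq s -> exists a x b, s = a ++ x :: x :: b.
Proof.
move=> sorted_s not_uniq.
have [sorted_lt|[a [x [y [b [s_xy nlt_xy]]]]]] :=
  sorted_or_adjacent (fun x y : 'I_n => (x < y)%N) s.
  have irr : irreflexive (fun x y : 'I_n => (x < y)%N) by move=> x; exact: ltnn.
  by rewrite (@sorted_uniq _ _ (fun y x z : 'I_n => @ltn_trans y x z) irr _ sorted_lt) in not_uniq.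
exists a, x, b; suff eq_xy : x = y by rewrite s_xy eq_xy.
apply/val_inj/anti_leq; rewrite (leqNgt y) nlt_xy andbT.
by move: sorted_s; rewrite s_xy => /cat_sorted2[_ /andP[-> _]].
Qed.

Lemma sorted_tnth_ltn {n r} (I : r.-tuple 'I_n) : sorted (fun x y : 'I_n => (x < y)%N) I ->
  forall a b : 'I_r, (tnth I a < tnth I b)%N = (a < b)%N.
Proof.
move=> sorted_I a b; have x0 := tnth I a.
have lt_nth := sorted_ltn_nth (fun y x z : 'I_n => @ltn_trans y x z) x0 sorted_I.
have in_I (c : 'I_r) : (c : nat) \in [pred i | (i < size I)%N] by rewrite inE size_tuple.
rewrite !(tnth_nth x0); case: (ltngtP a b) => [lt_ab|lt_ba|eq_ab].
- exact: lt_nth.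
- by apply/negbTE; rewrite -leqNgt ltnW // lt_nth.
- by rewrite eq_ab ltnn.
Qed.

Lemma map_tperm_adjacent {T : finType} (a b : seq T) (x y : T) :
  uniq (a ++ x :: y :: b) -> map (tperm x y) (a ++ x :: y :: b) = a ++ y :: x :: b.
Proof.
rewrite cat_uniq => /and3P[_ /hasPn notin_a].
rewrite /= inE negb_or => /andP[/andP[ne_xy xb] /andP[yb _]].
have fixed z : z \in a ++ b -> tperm x y z = z.
  rewrite mem_cat => zab; apply: tpermD.
    by apply: contraTneq zab => <-; rewrite negb_or xb andbT; apply: notin_a; rewrite mem_head.
  by apply: contraTneq zab => <-; rewrite negb_or yb andbT; apply: notin_a; rewrite !inE eqxx orbT.
rewrite map_cat /= tpermL tpermR.
by congr (_ ++ _ :: _ :: _); apply: map_id_in => z zs; apply: fixed; rewrite mem_cat zs ?orbT.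
Qed.

Lemma sum_perm_pairs {V : nmodType} {n} (G : 'S_n -> V) {i j : 'I_n} : i != j ->
  \sum_(s : 'S_n) G s = \sum_(s : 'S_n | (s i < s j)%N) (G s + G (tperm i j * s)%g).
Proof.
move=> ne_ij; rewrite big_split /= (bigID (fun s : 'S_n => (s i < s j)%N)) /=.
congr (_ + _); rewrite (reindex_inj (mulgI (tperm i j))) /=.
apply: eq_bigl => s; rewrite !permM tpermL tpermR -leqNgt leq_eqVlt.
suff /negbTE -> : nat_of_ord (s i) != s j by [].
by apply: contra ne_ij => /eqP/val_inj/perm_inj ->.
Qed.

Lemma sum_perm_tuples {T : finType} {V : nmodType} {r} (I : r.-tuple T) (G : seq T -> V) :
  uniq I -> \sum_(s : 'S_r) G (map (tnth I \o s) (enum 'I_r))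
            = \sum_(t : r.-tuple T | perm_eq t I) G t.
Proof.
move=> uniq_I; pose h (s : 'S_r) := [tuple tnth I (s k) | k < r].
have h_inj : injective h.
  move=> s1 s2 /(congr1 val) /= eq_s12; apply/permP => k.
  apply: (elimT (tuple_uniqP I) uniq_I).
  have nth_h (s : 'S_r) : nth (tnth I k) (map (tnth I \o s) (enum 'I_r)) k = tnth I (s k).
    by rewrite (nth_map k) ?size_enum_ord // nth_ord_enum.
  by rewrite -!nth_h eq_s12.
transitivity (\sum_(t in h @: [set: 'S_r]) G t).
  by rewrite big_imset /=; [apply: eq_bigl => s; rewrite in_setT | exact: in2W h_inj].
apply: eq_bigl => t; apply/imsetP/tuple_permP => [[s _ ->]|[s eq_t]]; first by exists s.
by exists s; rewrite ?in_setT //; apply/val_inj.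
Qed.

Lemma sum_rcons_tuple {T : finType} {V : nmodType} m (F : m.+1.-tuple T -> V) :
  \sum_(t : m.+1.-tuple T) F t = \sum_(k : T) \sum_(t : m.-tuple T) F [tuple of rcons t k].
Proof.
have rcons_belast (t : m.+1.-tuple T) :
    rcons (belast (thead t) (behead t)) (last (thead t) (behead t)) = t.
  by rewrite -lastI [in RHS](tuple_eta t).
rewrite pair_big /= (reindex (fun u : T * m.-tuple T => [tuple of rcons u.2 u.1])) //.
exists (fun t => (last (thead t) (behead t), [tuple of belast (thead t) (behead t)])).
  move=> [k t] _; have /rcons_inj[eq_t ->] := rcons_belast [tuple of rcons t k].
  by congr pair; apply/val_inj.
by move=> t _; apply/val_inj; exact: rcons_belast.
Qed.

Section EpsRec.
Context {R : comRingType} {n : nat} (q : 'M[R]_n).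
Implicit Types (s a b : seq 'I_n) (x y k : 'I_n).

Fixpoint eps_rec s : R :=
  if s is x :: s' then (\prod_(y <- s' | (y < x)%N) - q x y) * eps_rec s' else 1.

Lemma eps_rec_map r (f : 'I_r -> 'I_n) :
  \prod_(x : 'I_r) \prod_(y : 'I_r | (x < y)%N && (f y < f x)%N) - q (f x) (f y)
  = eps_rec (map f (enum 'I_r)).
Proof.
elim: r f => [|r IH] f; first by rewrite big_ord0 enum_ord0.
rewrite enum_ordSl /= big_ord_recl /= -map_comp -IH; congr (_ * _).
  rewrite big_mkcond big_ord_recl /= mul1r big_map big_enum_cond /= big_mkcond.
  by rewrite [RHS]big_mkcond.
apply: eq_bigr => x _; rewrite big_mkcond big_ord_recl /= mul1r big_mkcond [RHS]big_mkcond.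
by apply: eq_bigr => y _; rewrite /bump /= !add1n ltnS.
Qed.

Lemma eps_rec_rcons s k :
  eps_rec (rcons s k) = eps_rec s * \prod_(x <- s | (k < x)%N) - q x k.
Proof.
elim: s => [|x s IH] /=; first by rewrite !big_nil mulr1.
by rewrite IH big_rcons big_cons /=; case: ifP => _; ring.
Qed.

Lemma eps_rec_swap a b {x y} : (x < y)%N ->
  eps_rec (a ++ y :: x :: b) = - q y x * eps_rec (a ++ x :: y :: b).
Proof.
move=> lt_xy; elim: a => [|z a IH] /=.
  by rewrite !big_cons lt_xy ltnNge (ltnW lt_xy) /=; ring.
by rewrite IH mulrCA (perm_big _ (perm_swap_adjacent a b y x)).
Qed.

Lemma sorted_eps_rec s : sorted (fun x y : 'I_n => (x <= y)%N) s -> eps_rec s = 1.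
Proof.
elim: s => //= x s IH sorted_xs; rewrite IH ?(path_sorted sorted_xs) // mulr1.
have /allP le_x := order_path_min (fun y x z : 'I_n => @leq_trans y x z) sorted_xs.
by rewrite big1_seq // => y /andP[lt_yx /le_x]; rewrite leqNgt lt_yx.
Qed.

End EpsRec.

Lemma eps_rec_neq0 {R : idomainType} {n} (q : 'M[R]_n) (s : seq 'I_n) :
  (forall i j, q i j != 0) -> eps_rec q s != 0.
Proof.
move=> q_neq0; elim: s => [|x s IH] /=; first exact: oner_neq0.
rewrite mulf_neq0 // prodf_seq_neq0; apply/allP => y _ /=.
by apply/implyP => _; rewrite oppr_eq0.
Qed.

Fixpoint inversions {n} (s : seq 'I_n) : nat :=
  if s is x :: s' then (count (fun y : 'I_n => (y < x)%N) s' + inversions s')%N else 0.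

Lemma inversions_swap {n} a b (x y : 'I_n) : (y < x)%N ->
  inversions (a ++ x :: y :: b) = (inversions (a ++ y :: x :: b)).+1.
Proof.
move=> lt_yx; elim: a => [|z a IH] /=.
  by rewrite lt_yx ltnNge (ltnW lt_yx) /=; lia.
by rewrite IH addnS (seq.permP (perm_swap_adjacent a b x y)).
Qed.

Section Eps.
Context {n : nat} (q : 'M[C]_n).
Implicit Types (s t a b : seq 'I_n) (x y k : 'I_n).

Lemma epsE s : eps q s = if uniq s then eps_rec q s else 0.
Proof. by rewrite /eps eps_rec_map map_tnth_enum. Qed.

Lemma eps_swap a b {x y} : (x < y)%N ->
  eps q (a ++ y :: x :: b) = - q y x * eps q (a ++ x :: y :: b).
Proof.
move=> lt_xy; rewrite !epsE (perm_uniq (perm_swap_adjacent a b y x)).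
by case: ifP => _; rewrite ?mulr0 ?(eps_rec_swap q _ _ lt_xy).
Qed.

Lemma eps_full t : size t = n ->
  eps q t = if perm_eq t (enum 'I_n) then eps_rec q t else 0.
Proof.
move=> size_t; rewrite epsE; have [perm_t|not_perm] := boolP (perm_eq t _).
  by rewrite (perm_uniq perm_t) enum_uniq.
case: ifP => // uniq_t; case/negP: not_perm; apply: uniq_perm_subset => //.
- exact: enum_uniq.
- by move=> x _; rewrite mem_enum.
- by rewrite size_enum_ord size_t.
Qed.

Lemma mem_compl k x : (x \in compl_seq k) = (x != k).
Proof. by rewrite mem_filter mem_enum andbT. Qed.

Lemma compl_uniq k : uniq (compl_seq k).
Proof. by rewrite filter_uniq // enum_uniq. Qed.

Lemma compl_sorted k : sorted (fun x y : 'I_n => (x < y)%N) (compl_seq k).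
Proof. exact: (sorted_filter (fun y x z : 'I_n => @ltn_trans y x z) _ (sorted_enum_ord n)). Qed.

Lemma eps_rcons_compl t k : size t = n.-1 ->
  eps q (rcons t k) = if perm_eq t (compl_seq k) then eps q (compl_plus k) * eps_rec q t else 0.
Proof.
move=> size_t; rewrite /compl_plus !epsE !rcons_uniq mem_compl eqxx compl_uniq /=.
have [perm_t|not_perm] := boolP (perm_eq t (compl_seq k)).
  rewrite (perm_mem perm_t) mem_compl eqxx (perm_uniq perm_t) compl_uniq /=.
  rewrite !eps_rec_rcons (perm_big _ perm_t) [eps_rec q (compl_seq k)]sorted_eps_rec ?mul1r 1?mulrC //.
  by apply: sub_sorted (compl_sorted k) => x y /ltnW.
case: ifP => // /andP[k_notin_t uniq_t]; case/negP: not_perm.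
apply: uniq_perm_subset; rewrite ?compl_uniq ?size_t ?(eqP (compl_seq_size k)) // => x x_in_t.
by rewrite mem_compl; apply: contraNneq k_notin_t => <-.
Qed.

Lemma eps_compl_plus_neq0 k : parametric q -> eps q (compl_plus k) != 0.
Proof.
case=> q_neq0 _; rewrite epsE rcons_uniq mem_compl eqxx compl_uniq.
exact: eps_rec_neq0.
Qed.

End Eps.

Section ColumnDeterminant.
Context {A : algType C} {n : nat} (q : 'M[C]_n) (M : 'M[A]_n).
Implicit Types (rows cols a b c d : seq 'I_n) (i j k l : 'I_n).

Definition entry_prod rows cols : A := \prod_(ik <- zip rows cols) M ik.1 ik.2.

(* cdet_q(M_{(1..n),J}) for an arbitrary column multi-index J, repetitions allowed. *)
Definition cdet_cols cols : A :=
  \sum_(s : 'S_n) eps_rec q (map s (enum 'I_n)) *: entry_prod (map s (enum 'I_n)) cols.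

Definition qminor i j k l : A := M i k * M j l - q j i *: (M j k * M i l).

Lemma entry_prod_adjacent a b c d i j k l : size a = size c ->
  entry_prod (a ++ i :: j :: b) (c ++ k :: l :: d)
  = entry_prod a c * (M i k * (M j l * entry_prod b d)).
Proof. by move=> size_a; rewrite /entry_prod zip_cat // big_cat /= !big_cons. Qed.

Lemma entry_prod_rcons rows cols i k : size rows = size cols ->
  entry_prod (rcons rows i) (rcons cols k) = entry_prod rows cols * M i k.
Proof. by move=> size_rc; rewrite /entry_prod zip_rcons // -cats1 big_cat big_seq1. Qed.

Lemma cdet_cols_pairs {a b c d i j k l} :
  enum 'I_n = a ++ i :: j :: b -> size a = size c ->
  cdet_cols (c ++ k :: l :: d) =
  \sum_(s : 'S_n | (s i < s j)%N) eps_rec q (map s (enum 'I_n)) *: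
     (entry_prod (map s a) c * (qminor (s i) (s j) k l * entry_prod (map s b) d)).
Proof.
move=> enum_ij size_a.
have uniq_ij : uniq (a ++ i :: j :: b) by rewrite -enum_ij enum_uniq.
have ne_ij : i != j.
  by apply: contraTneq uniq_ij => ->; rewrite cat_uniq /= inE eqxx /= !andbF.
rewrite /cdet_cols (sum_perm_pairs _ ne_ij); apply: eq_bigr => s lt_ij.
have size_sa : size (map s a) = size c by rewrite size_map.
have -> : map (tperm i j * s)%g (enum 'I_n) = map s a ++ s j :: s i :: map s b.
  by rewrite (eq_map (permM _ s)) map_comp enum_ij map_tperm_adjacent // map_cat.
rewrite enum_ij map_cat /= (eps_rec_swap q _ _ lt_ij) !entry_prod_adjacent //.
rewrite [(- _ * _)]mulrC -scalerA -scalerDr; congr (_ *: _).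
by rewrite /qminor mulrBl mulrBr -scalerAl scalerAr scaleNr !mulrA mulrN.
Qed.

Lemma enum_split_adjacent c d k l : size (c ++ k :: l :: d) = n ->
  exists a i j b, enum 'I_n = a ++ i :: j :: b /\ size a = size c.
Proof.
move=> size_cd; apply: split_adjacent_at.
by rewrite size_enum_ord -{2}size_cd size_cat /= !addnS ltnS leq_addr.
Qed.

Section ManinMatrix.
Variable p : 'M[C]_n.
Hypotheses (p_param : parametric p) (M_manin : manin q p M).

Lemma qminor_diag i j k : (i < j)%N -> qminor i j k k = 0.
Proof. by move=> lt_ij; rewrite /qminor M_manin.1 // subrr. Qed.

Lemma qminor_manin i j k l : (i < j)%N -> (k < l)%N ->
  qminor i j k l = - p k l *: qminor i j l k.
Proof.
move=> lt_ij lt_kl; apply/eqP; rewrite scaleNr -addr_eq0; apply/eqP.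
rewrite -[RHS](M_manin.2 i j k l lt_ij lt_kl) /qminor scalerBr scalerA [p k l * _]mulrC.
by rewrite [LHS](AC (2*2) (((1*4)*3)*2)).
Qed.

Lemma qminor_swap i j k l : (i < j)%N -> qminor i j l k = - p l k *: qminor i j k l.
Proof.
move=> lt_ij; case: (ltngtP k l) => [lt_kl|lt_lk|eq_kl].
- have [_ [p_inv _]] := p_param.
  by rewrite [in RHS]qminor_manin // scalerA mulrNN p_inv scale1r.
- exact: qminor_manin.
- by rewrite (val_inj eq_kl) qminor_diag // scaler0.
Qed.

Lemma cdet_cols_swap c d k l : size (c ++ k :: l :: d) = n ->
  cdet_cols (c ++ l :: k :: d) = - p l k *: cdet_cols (c ++ k :: l :: d).
Proof.
move=> /enum_split_adjacent[a [i [j [b [enum_ij size_a]]]]].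
rewrite !(cdet_cols_pairs enum_ij size_a) scaler_sumr; apply: eq_bigr => s lt_ij.
by rewrite qminor_swap // -scalerAl -scalerAr !scalerA mulrC.
Qed.

Lemma cdet_cols_repeat c d k : size (c ++ k :: k :: d) = n -> cdet_cols (c ++ k :: k :: d) = 0.
Proof.
move=> /enum_split_adjacent[a [i [j [b [enum_ij size_a]]]]].
rewrite (cdet_cols_pairs enum_ij size_a) big1 // => s lt_ij.
by rewrite qminor_diag // mul0r mulr0 scaler0.
Qed.

Lemma cdet_cols_eps cols : size cols = n -> cdet_cols cols = eps p cols *: cdet_cols (enum 'I_n).
Proof.
have [N] := ubnP (inversions cols); elim: N cols => // N IH cols lt_N size_cols.
have [sorted_cols|[a [x [y [b [cols_xy /negbTE]]]]]] :=
  sorted_or_adjacent (fun x y : 'I_n => (x <= y)%N) cols; last first.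
  rewrite leqNgt => /negbFE lt_yx.
  have size_yx : size (a ++ y :: x :: b) = n by move: size_cols; rewrite cols_xy !size_cat.
  have lt_yx_N : (inversions (a ++ y :: x :: b) < N)%N.
    by rewrite -ltnS -inversions_swap // -cols_xy.
  by rewrite cols_xy cdet_cols_swap // IH // scalerA (eps_swap p _ _ lt_yx).
have [uniq_cols|not_uniq] := boolP (uniq cols).
  have cols_enum := sorted_uniq_enum_ord size_cols uniq_cols sorted_cols.
  by rewrite epsE uniq_cols sorted_eps_rec // scale1r -cols_enum.
have [a [x [b cols_xx]]] := sorted_not_uniq_repeat sorted_cols not_uniq.
by rewrite epsE (negbTE not_uniq) scale0r cols_xx cdet_cols_repeat // -cols_xx.
Qed.

End ManinMatrix.

Lemma cdet_sorted r (I J : r.-tuple 'I_n) : sorted (fun x y : 'I_n => (x < y)%N) I ->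
  cdet q M I J = \sum_(s : 'S_r) eps_rec q (map (tnth I \o s) (enum 'I_r)) *:
                   entry_prod (map (tnth I \o s) (enum 'I_r)) J.
Proof.
move=> sorted_I; apply: eq_bigr => s _; congr (_ *: _).
  rewrite /eps_perm -eps_rec_map; apply: eq_bigr => x _; apply: eq_bigl => y /=.
  by rewrite sorted_tnth_ltn.
by rewrite /entry_prod -[in RHS](map_tnth_enum J) zip_map big_map enumT.
Qed.

Lemma cdet_perm_rows r (I J : r.-tuple 'I_n) : sorted (fun x y : 'I_n => (x < y)%N) I ->
  cdet q M I J = \sum_(t : r.-tuple 'I_n | perm_eq t I) eps_rec q t *: entry_prod t J.
Proof.
move=> sorted_I; rewrite cdet_sorted // (sum_perm_tuples I (fun t => eps_rec q t *: entry_prod t J)) //.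
by apply: (sorted_uniq (fun y x z : 'I_n => @ltn_trans y x z)) sorted_I => x; exact: ltnn.
Qed.

Lemma cdet_full_cols : cdet_full q M = cdet_cols (enum 'I_n).
Proof.
rewrite /cdet_full cdet_sorted ?sorted_enum_ord //; apply: eq_bigr => s _.
by rewrite (eq_map (g := s) (fun i => tnth_ord_tuple (s i))).
Qed.

Lemma cdet_cols_tuples cols :
  cdet_cols cols = \sum_(t : n.-tuple 'I_n) eps q t *: entry_prod t cols.
Proof.
pose G t := eps_rec q t *: entry_prod t cols.
under [RHS]eq_bigr => t _ do rewrite eps_full ?size_tuple // (fun_if (fun e => e *: _)) scale0r.
rewrite -big_mkcond /=; transitivity (\sum_(s : 'S_n) G (map (tnth (ord_tuple n) \o s) (enum 'I_n))).
  by apply: eq_bigr => s _; rewrite (eq_map (g := s) (fun i => tnth_ord_tuple (s i))).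
by rewrite sum_perm_tuples ?enum_uniq.
Qed.

End ColumnDeterminant.

Lemma cdet_cols_rcons {A : algType C} {m} (q : 'M[C]_m.+1) (M : 'M[A]_m.+1)
    (cs : m.-tuple 'I_m.+1) y :
  cdet_cols q M (rcons cs y) = \sum_k eps q (compl_plus k) *: (cdet q M (compl k) cs * M k y).
Proof.
rewrite cdet_cols_tuples sum_rcons_tuple; apply: eq_bigr => k _.
rewrite cdet_perm_rows ?compl_sorted // mulr_suml scaler_sumr [RHS]big_mkcond /=.
apply: eq_bigr => t _; rewrite eps_rcons_compl ?size_tuple // entry_prod_rcons ?size_tuple //.
by case: ifP => _; rewrite ?scale0r // -scalerAl scalerA.
Qed.

Definition qadj {A : algType C} {n} (q p : 'M[C]_n) (M : 'M[A]_n) : 'M[A]_n :=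
  \matrix_(i, j)
    (((eps p (compl_plus i))^-1 * eps q (compl_plus j)) *: cdet q M (compl j) (compl i)).

Lemma mul_qadj_mx {A : algType C} {n} (q p : 'M[C]_n) (M : 'M[A]_n) :
  parametric p -> manin q p M -> qadj q p M *m M = (cdet_full q M)%:M.
Proof.
case: n q p M => [|m] q p M p_param M_manin; first by apply/matrixP => -[].
apply/matrixP => i j; rewrite !mxE.
under eq_bigr => k _ do rewrite mxE -scalerA -!scalerAl.
rewrite -scaler_sumr -cdet_cols_rcons (cdet_cols_eps _ _ _ p_param M_manin) ?size_rcons ?size_tuple //.
rewrite -cdet_full_cols scalerA; have [<-|ne_ij] := eqVneq i j.
  by rewrite mulVf ?scale1r ?mulr1n ?eps_compl_plus_neq0.
by rewrite [X in _ * X]epsE rcons_uniq mem_compl eq_sym ne_ij mulr0 scale0r mulr0n.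
Qed.

Theorem mainTheorem4 (A : algType C) (n : nat) (q p : 'M[C]_n) (M : 'M[A]_n) :
  parametric q -> parametric p -> manin q p M ->
  forall Minv : 'M[A]_n, M *m Minv = 1%:M -> Minv *m M = 1%:M ->
  forall d : A, cdet_full q M * d = 1 -> d * cdet_full q M = 1 ->
  forall i j : 'I_n,
    Minv i j = ((eps p (compl_plus i))^-1 * eps q (compl_plus j))
                 *: (d * cdet q M (compl j) (compl i)).
Proof.
(* The factors eps q (compl_plus j) are never inverted, so q need not be parametric. *)
move=> _ p_param M_manin Minv M_Minv _ d _ d_cdet i j.
have left_inv : (d *: qadj q p M) *m M = 1%:M.
  by rewrite -scalemxAl mul_qadj_mx // scale_scalar_mx d_cdet.
have -> : Minv = d *: qadj q p M.
  by rewrite -[Minv]mul1mx -left_inv -mulmxA M_Minv mulmx1.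
by rewrite !mxE scalerAr.
Qed.
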